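(* Let $(a,b,c)$ be a Markov triple, let $m_1,m_2$ be positive integers with $a^2m_1+b^2m_2=c^2$, and let $l_2=(m_2+1)/a$ (a positive integer). Put $\mathbf{u}_1=(b^2,-m_1)$, $\mathbf{u}_2=-(a^2,m_2)$, $\mathbf{u}_3=(0,1)$ and $\mathbf{w}_1=-(a,l_2)$. Let $\Delta\subset\mathbb{R}^2$ be the triangle with vertices $V_0$, $V_1=V_0+a^2\mathbf{u}_1$, $V_2=V_1+b^2\mathbf{u}_2$ (so that $V_0=V_2+c^2\mathbf{u}_3$). Let $\ell$ be the line through $V_2$ in direction $\mathbf{w}_1$, let $Q$ be the point where $\ell$ meets the edge $[V_0,V_1]$, and let $M$ be the affine map of $\mathbb{R}^2$ fixing $\ell$ pointwise with linear part $v\mapsto v+\det(\mathbf{w}_1,v)\,\mathbf{w}_1$. Let $\Delta'=\mathrm{conv}(V_0,Q,V_2)\cup M(\mathrm{conv}(Q,V_1,V_2))$ be the base diagram obtained from $\Delta$ by transferring the cut (the cut being the segment of $\ell$ from the node to $V_2$) to its left. Then $\Delta'$ is a triangle whose three edges have affine lengths $\lambda c^2$, $\lambda b^2$, $\lambda a'^2$ for some $\lambda>0$, where $a'=3bc-a$.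
   Context: A Markov triple is a triple of positive integers $(a,b,c)$ with $a^2+b^2+c^2=3abc$. A vector $v\in\mathbb{Z}^2$ is primitive if it is not a positive integer multiple of another lattice vector; a vector $w=\lambda v$ with $v$ primitive and $\lambda\geq0$ has affine length $\lambda$, and the affine length of a segment with rational slope is the affine length of its displacement vector. The triangle $\Delta$ (with a nodal fiber on $\ell$ near each vertex and a cut from the node to the vertex) is the base diagram of an almost toric fibration of $\mathbb{CP}^2$ obtained from $\mathbb{CP}(a^2,b^2,c^2)$ by rational blowdowns at its three orbifold points; $M$ is the monodromy across the cut at $V_2$, and it sends $\mathbf{u}_2$ to $\mathbf{u}_3$. Transferring the cut produces another base diagram $\Delta'$ of the same almost toric fibration, with the cut now running from the node to $Q$. *)

From Stdlib Require Import Reals ZArith.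
Open Scope R_scope.

Definition pt := (R * R)%type.

Definition padd (p q : pt) : pt := (fst p + fst q, snd p + snd q).
Definition psub (p q : pt) : pt := (fst p - fst q, snd p - snd q).
Definition pscale (t : R) (p : pt) : pt := (t * fst p, t * snd p).
Definition det2 (v w : pt) : R := fst v * snd w - snd v * fst w.
Definition zpt (x y : Z) : pt := (IZR x, IZR y).

Definition markov_triple (a b c : Z) : Prop :=
  (0 < a)%Z /\ (0 < b)%Z /\ (0 < c)%Z /\ (a*a + b*b + c*c = 3*a*b*c)%Z.

Definition primitive (v1 v2 : Z) : Prop :=
  (v1 <> 0%Z \/ v2 <> 0%Z) /\ forall (k w1 w2 : Z), (0 < k)%Z -> v1 = (k * w1)%Z -> v2 = (k * w2)%Z ->
    (w1 <> v1 \/ w2 <> v2) -> False.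

Definition has_affine_length (d : pt) (L : R) : Prop :=
  exists v1 v2 : Z, primitive v1 v2 /\ 0 <= L /\ d = pscale L (zpt v1 v2).

Definition segment (p q : pt) (x : pt) : Prop :=
  exists t, 0 <= t <= 1 /\ x = padd p (pscale t (psub q p)).

Definition conv3 (p q r : pt) (x : pt) : Prop :=
  exists s t u, 0 <= s /\ 0 <= t /\ 0 <= u /\ s + t + u = 1 /\
    x = padd (pscale s p) (padd (pscale t q) (pscale u r)).

Definition noncollinear (p q r : pt) : Prop := det2 (psub q p) (psub r p) <> 0.

From Pilot Require Import Defs.
From Stdlib Require Import Reals ZArith Lia Lra Psatz Znumtheory Zwf.
Open Scope R_scope.

(* The transferred diagram is the triangle V0, Q, M V1: the shear M fixes Q and
   V2, so it maps conv(Q, V1, V2) onto conv(Q, M V1, V2), and V2 lies inside the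
   segment [V0, M V1], so this triangle glues with conv(V0, Q, V2) along [Q, V2].
   With a a' = b^2 + c^2 and a l2 = m2 + 1 one computes, for lam = a / a',
   Q - V0 = lam c^2 u1, V0 - M V1 = lam a'^2 u3 and M V1 - Q = lam b^2 (-c^2, -K)
   where a^2 K = c^2 m2 + b^2 + 2 c^2.  These direction vectors are primitive
   because Markov numbers are pairwise coprime, which follows by Vieta descent
   to (1, 1, 1). *)

Section MarkovArithmetic.
Local Open Scope Z_scope.

Lemma markov_triple_rotate a b c : markov_triple a b c -> markov_triple b c a.
Proof. unfold markov_triple; lia. Qed.

Lemma markov_triple_vieta a b c : markov_triple a b c -> markov_triple a b (3*a*b - c).
Proof.
  intros (Ha & Hb & Hc & E). assert (c * (3*a*b - c) = a*a + b*b) by lia.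
  repeat split; nia.
Qed.

Lemma markov_vieta_lt a b c :
  markov_triple a b c -> a <= c -> b <= c -> 1 < c -> 3*a*b - c < c.
Proof.
  intros (Ha & Hb & Hc & E) Hac Hbc Hc1.
  assert (Hprod : c * (3*a*b - c) = a*a + b*b) by lia.
  (* the roots c and 3ab - c of x^2 - 3abx + a^2 + b^2 lie on either side of max(a, b) *)
  destruct (Z.le_ge_cases a b) as [Hab|Hab].
  - assert ((b - c) * (b - (3*a*b - c)) = a*a - b*b*(3*a - 2)) by lia.
    nia.
  - assert ((a - c) * (a - (3*a*b - c)) = b*b - a*a*(3*b - 2)) by lia.
    nia.
Qed.

Lemma markov_descent a b c : markov_triple a b c -> 3 < a + b + c ->
  3*b*c - a < a \/ 3*c*a - b < b \/ 3*a*b - c < c.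
Proof.
  intros Hm Hs. pose proof Hm as (Ha & Hb & Hc & _).
  destruct (Z.le_ge_cases a c), (Z.le_ge_cases b c), (Z.le_ge_cases a b).
  all: first
    [ right; right; apply markov_vieta_lt; [exact Hm | lia..]
    | left; apply (markov_vieta_lt b c a); [apply markov_triple_rotate, Hm | lia..]
    | right; left; apply (markov_vieta_lt c a b);
      [apply markov_triple_rotate, markov_triple_rotate, Hm | lia..] ].
Qed.

Lemma markov_common_divisor a b c : markov_triple a b c ->
  forall d, (d | a) -> (d | b) -> (d | c) -> (d | 1).
Proof.
  remember (a + b + c) as s eqn:Hs. revert a b c Hs.
  induction s as [s IH] using (well_founded_induction (Zwf_well_founded 0)).
  intros a b c -> Hm d Da Db Dc. pose proof Hm as (Ha & Hb & Hc & _).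
  destruct (Z.le_gt_cases (a + b + c) 3) as [Hs | Hs].
  { replace a with 1 in Da by lia. exact Da. }
  assert (Dprod : forall x y, (d | y) -> (d | 3*x*y))
    by (intros; apply Z.divide_mul_r; assumption).
  destruct (markov_descent a b c Hm Hs) as [Hlt | [Hlt | Hlt]].
  - apply (IH (3*b*c - a + b + c)) with (3*b*c - a) b c; auto.
    + unfold Zwf; lia.
    + do 2 apply markov_triple_rotate.
      apply markov_triple_vieta, markov_triple_rotate, Hm.
    + apply Z.divide_sub_r; auto.
  - apply (IH (a + (3*c*a - b) + c)) with a (3*c*a - b) c; auto.
    + unfold Zwf; lia.
    + apply markov_triple_rotate.
      apply markov_triple_vieta, markov_triple_rotate, markov_triple_rotate, Hm.
    + apply Z.divide_sub_r; auto.
  - apply (IH (a + b + (3*a*b - c))) with a b (3*a*b - c); auto.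
    + unfold Zwf; lia.
    + apply markov_triple_vieta, Hm.
    + apply Z.divide_sub_r; auto.
Qed.

Lemma markov_rel_prime a b c : markov_triple a b c -> rel_prime a b.
Proof.
  intros Hm. pose proof Hm as (Ha & Hb & Hc & E).
  constructor; try apply Z.divide_1_l. intros d Da Db.
  assert (Hdc : rel_prime d c).
  { constructor; try apply Z.divide_1_l. intros e De Dc.
    apply (markov_common_divisor a b c Hm); eauto using Z.divide_trans. }
  assert (Dcc : (d | c * c)).
  { replace (c * c) with (a * (3*b*c - a) - b * b) by lia.
    apply Z.divide_sub_r; apply Z.divide_mul_l; assumption. }
  apply (markov_common_divisor a b c Hm); auto. apply (Gauss d c c); assumption.
Qed.

Lemma rel_prime_of_square_comb x y z s t :
  rel_prime x z -> z * z = x * s + y * t -> rel_prime x y.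
Proof.
  intros Hxz E. constructor; try apply Z.divide_1_l. intros d Dx Dy.
  assert (Dzz : (d | z * z)).
  { rewrite E. apply Z.divide_add_r; apply Z.divide_mul_l; assumption. }
  pose proof Hxz as [_ _ Hgcd]. apply Hgcd; auto.
  apply (Gauss d z z Dzz), (rel_prime_div x z d Hxz Dx).
Qed.

Lemma rel_prime_oppr x y : rel_prime x y -> rel_prime x (- y).
Proof.
  intros [_ _ H]. constructor; try apply Z.divide_1_l.
  intros d Dx Dy. apply H; [exact Dx|].
  apply Z.divide_opp_r in Dy. rewrite Z.opp_involutive in Dy. exact Dy.
Qed.

Lemma rel_prime_square_l x y : rel_prime x y -> rel_prime (x * x) y.
Proof. intros H. apply rel_prime_sym, rel_prime_mult; apply rel_prime_sym; exact H. Qed.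

Lemma primitive_of_rel_prime v1 v2 :
  (v1 <> 0 \/ v2 <> 0) -> rel_prime v1 v2 -> Defs.primitive v1 v2.
Proof.
  intros Hv [_ _ H]. split; [exact Hv|].
  intros k w1 w2 Hk E1 E2 Hne.
  assert (Hk1 : (k | 1)) by (apply H; [exists w1 | exists w2]; lia).
  apply Z.divide_pos_le in Hk1; [|lia]. replace k with 1 in * by lia. lia.
Qed.

Lemma primitive_0_1 : Defs.primitive 0 1.
Proof. apply primitive_of_rel_prime; [right; lia | apply rel_prime_sym, rel_prime_1]. Qed.

Section MarkovWeights.
Variables a b c m1 m2 : Z.
Hypothesis Hm : markov_triple a b c.
Hypothesis Hmm : a*a*m1 + b*b*m2 = c*c.

Lemma markov_weight_divides : (a | m2 + 1).
Proof.
  pose proof Hm as (Ha & Hb & Hc & E).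
  apply (Gauss a (b * b)).
  - exists (3*b*c - a - a*m1). lia.
  - apply rel_prime_mult; apply (markov_rel_prime a b c Hm).
Qed.

Lemma markov_weight_primitive : Defs.primitive (b * b) (- m1).
Proof.
  pose proof Hm as (Ha & Hb & Hc & E).
  apply primitive_of_rel_prime; [left; nia|]. apply rel_prime_oppr, rel_prime_square_l.
  apply (rel_prime_of_square_comb b m1 c (b * m2) (a * a)); [|lia].
  apply (markov_rel_prime b c a), markov_triple_rotate, Hm.
Qed.

Lemma markov_cofactor : exists K, (3*b*c - a) * (3*b*c - a) - c*c*m1 = K * (b*b) /\
  Defs.primitive (- (c * c)) (- K).
Proof.
  pose proof Hm as (Ha & Hb & Hc & E).
  set (a' := 3*b*c - a).
  assert (Hid : (a*a) * (a'*a' - c*c*m1) = (b*b) * (c*c*m2 + b*b + 2*c*c)).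
  { replace (a*a*(a'*a' - c*c*m1)) with ((a*a')*(a*a') - c*c*(a*a*m1)) by ring.
    replace (a*a') with (b*b + c*c) by (unfold a'; nia).
    replace (a*a*m1) with (c*c - b*b*m2) by lia. ring. }
  assert (Hrab : rel_prime (b * b) (a * a))
    by (apply rel_prime_square_l, rel_prime_sym, rel_prime_square_l, (markov_rel_prime a b c Hm)).
  destruct (Gauss (b*b) (a*a) (a'*a' - c*c*m1)) as [K HK]; auto.
  { rewrite Hid. apply Z.divide_mul_l, Z.divide_refl. }
  exists K. split; [exact HK|].
  assert (HaK : a*a*K = c*c*m2 + b*b + 2*c*c).
  { apply (Z.mul_reg_l _ _ (b*b)); [lia|]. rewrite <- Hid, HK. ring. }
  apply primitive_of_rel_prime; [left; nia|].
  apply rel_prime_sym, rel_prime_oppr, rel_prime_sym, rel_prime_oppr, rel_prime_square_l.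
  apply (rel_prime_of_square_comb c K b (- (c*m2 + 2*c)) (a*a)); [|lia].
  apply rel_prime_sym, (markov_rel_prime b c a), markov_triple_rotate, Hm.
Qed.
End MarkovWeights.
End MarkovArithmetic.

Lemma linear_part_affine (w : pt) (M : pt -> pt) :
  (forall p q, psub (M p) (M q) = padd (psub p q) (pscale (det2 w (psub p q)) w)) ->
  forall A B C s t u, s + t + u = 1 ->
  M (padd (pscale s A) (padd (pscale t B) (pscale u C))) =
  padd (pscale s (M A)) (padd (pscale t (M B)) (pscale u (M C))).
Proof.
  intros HM A B C s t u Hstu.
  assert (HMR : forall p, M p = padd (M C) (padd (psub p C) (pscale (det2 w (psub p C)) w))).
  { intros p. rewrite <- HM. destruct (M p), (M C). unfold padd, psub; simpl; f_equal; ring. }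
  rewrite (HMR (padd _ _)), (HMR A), (HMR B).
  replace u with (1 - s - t) by lra.
  destruct (M C), w, A, B, C. unfold padd, psub, pscale, det2; simpl. f_equal; ring.
Qed.

Lemma image_conv3 (w : pt) (M : pt -> pt) :
  (forall p q, psub (M p) (M q) = padd (psub p q) (pscale (det2 w (psub p q)) w)) ->
  forall A B C x, (exists y, conv3 A B C y /\ x = M y) <-> conv3 (M A) (M B) (M C) x.
Proof.
  intros HM A B C x. split.
  - intros (y & (s & t & u & Hs & Ht & Hu & Hstu & ->) & ->).
    exists s, t, u. repeat split; auto. apply (linear_part_affine w); assumption.
  - intros (s & t & u & Hs & Ht & Hu & Hstu & ->).
    exists (padd (pscale s A) (padd (pscale t B) (pscale u C))). split.
    + exists s, t, u. repeat split; auto.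
    + symmetry. apply (linear_part_affine w); assumption.
Qed.

Lemma conv3_split (A B C O : pt) (be : R) :
  0 < be < 1 -> O = padd (pscale (1 - be) A) (pscale be C) ->
  forall x, conv3 A B O x \/ conv3 B C O x <-> conv3 A B C x.
Proof.
  intros Hbe -> x.
  destruct A as [px py], B as [qx qy], C as [rx ry], x as [xx xy].
  unfold conv3, padd, pscale; simpl. split.
  - intros [(s & t & u & Hs & Ht & Hu & Hstu & Hx) | (s & t & u & Hs & Ht & Hu & Hstu & Hx)];
      injection Hx as Ex Ey.
    + exists (s + u * (1 - be)), t, (u * be). repeat split; try nra. f_equal; nra.
    + exists (u * (1 - be)), s, (t + u * be). repeat split; try nra. f_equal; nra.
  - intros (s & t & u & Hs & Ht & Hu & Hstu & Hx). injection Hx as Ex Ey.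
    (* split according to the side of the line B O on which x lies *)
    destruct (Rle_lt_dec (u * (1 - be)) (s * be)) as [Hside | Hside].
    + left. exists (s - (1 - be) * u / be), t, (u / be).
      assert (0 <= u / be) by (apply Rmult_le_pos; [lra | apply Rlt_le, Rinv_0_lt_compat; lra]).
      assert ((1 - be) * u / be <= s)
        by (apply (Rmult_le_reg_r be); [lra|]; field_simplify; lra).
      repeat split; try lra.
      * transitivity (s + t + u); [field; lra | exact Hstu].
      * f_equal; [rewrite Ex | rewrite Ey]; field; lra.
    + right. exists t, (u - be * s / (1 - be)), (s / (1 - be)).
      assert (0 <= s / (1 - be)) by (apply Rmult_le_pos; [lra | apply Rlt_le, Rinv_0_lt_compat; lra]).
      assert (be * s / (1 - be) <= u)
        by (apply (Rmult_le_reg_r (1 - be)); [lra|]; field_simplify; lra).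
      repeat split; try lra.
      * transitivity (s + t + u); [field; lra | exact Hstu].
      * f_equal; [rewrite Ex | rewrite Ey]; field; lra.
Qed.

Section CutTransfer.
Variables (a b c m1 m2 l2 a' K : Z) (V0 : pt).
Hypotheses (Ha : (0 < a)%Z) (Hb : (0 < b)%Z) (Hc : (0 < c)%Z).
Hypothesis Hmm : (a*a*m1 + b*b*m2 = c*c)%Z.
Hypothesis Hl2 : (a*l2 = m2 + 1)%Z.
Hypothesis Haa' : (a*a' = b*b + c*c)%Z.
Hypothesis HK : (a'*a' - c*c*m1 = K*(b*b))%Z.
Hypothesis Hprim_u1 : Defs.primitive (b*b) (- m1).
Hypothesis Hprim_K : Defs.primitive (- (c*c)) (- K).

Local Notation u1 := (zpt (b*b) (- m1)).
Local Notation w1 := (zpt (- a) (- l2)).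
Local Notation V1 := (padd V0 (pscale (IZR (a*a)) u1)).
Local Notation V2 := (padd V1 (pscale (IZR (b*b)) (zpt (- (a*a)) (- m2)))).
Local Notation lam := (IZR a / IZR a').
Local Notation Q' := (padd V0 (pscale (lam * IZR (c*c)) u1)).
Local Notation V1' := (padd V0 (pscale (lam * IZR (a'*a')) (zpt 0 (-1)))).

Local Ltac push_IZR := rewrite ?opp_IZR, ?plus_IZR, ?minus_IZR, ?mult_IZR in *.

Lemma transfer_identities_R :
  0 < IZR a /\ 0 < IZR b /\ 0 < IZR c /\ 0 < IZR a' /\
  IZR a * IZR a * IZR m1 + IZR b * IZR b * IZR m2 = IZR c * IZR c /\
  IZR a * IZR l2 = IZR m2 + 1 /\ IZR a * IZR a' = IZR b * IZR b + IZR c * IZR c /\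
  IZR a' * IZR a' - IZR c * IZR c * IZR m1 = IZR K * (IZR b * IZR b).
Proof.
  assert (Ha' : (0 < a')%Z) by nia.
  apply IZR_lt in Ha, Hb, Hc, Ha'.
  apply (f_equal IZR) in Hmm, Hl2, Haa', HK. push_IZR.
  repeat split; assumption.
Qed.

Local Ltac coordinates :=
  destruct transfer_identities_R as (HA & HB & HC & HA' & EA & EL & EA' & EK);
  destruct V0 as [x0 y0]; unfold zpt, padd, psub, pscale, det2 in *; simpl in *; push_IZR;
  set (A := IZR a) in *; set (B := IZR b) in *; set (C := IZR c) in *;
  set (A' := IZR a') in *; set (M1 := IZR m1) in *; set (M2 := IZR m2) in *;
  set (L2 := IZR l2) in *; set (RK := IZR K) in *.

Lemma cut_meets_edge (Q : pt) :
  (exists t, Q = padd V2 (pscale t w1)) -> segment V0 V1 Q -> Q = Q'.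
Proof.
  intros [t HQl] (s & _ & ->). coordinates.
  injection HQl as Ex Ey.
  assert (Ht : t = - s * A * (B * B)).
  { apply (Rmult_eq_reg_r A); [nra | lra]. }
  subst t.
  assert (Hs : s = C * C / (A * A')).
  { assert (s * (B * B) * (A * L2) = s * (B * B) * (M2 + 1))
      by (rewrite EL; ring).
    assert (s * (A * A * M1 + B * B * M2) = s * (C * C))
      by (rewrite EA; ring).
    apply (Rmult_eq_reg_r (A * A')); [|nra]. field_simplify; [|lra].
    replace (s * A * A') with (s * (A * A')) by ring. rewrite EA'. nra. }
  subst s. f_equal; field; lra.
Qed.

Lemma shear_image_vertex (M : pt -> pt) :
  (forall p q, psub (M p) (M q) = padd (psub p q) (pscale (det2 w1 (psub p q)) w1)) ->
  M V2 = V2 -> M V1 = V1'.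
Proof.
  intros HM HMV2. pose proof (HM V1 V2) as E. rewrite HMV2 in E.
  destruct (M V1) as [mx my]. coordinates.
  injection E as Ex Ey.
  assert (A * A * (B * B) * L2 = A * (B * B) * (M2 + 1))
    by (rewrite <- EL; ring).
  f_equal; field_simplify; nra.
Qed.

Lemma transfer_scale_pos : 0 < lam.
Proof. coordinates. apply Rdiv_lt_0_compat; assumption. Qed.

Lemma cut_vertex_on_edge : exists be, 0 < be < 1 /\ V2 = padd (pscale (1 - be) V0) (pscale be V1').
Proof.
  coordinates. exists (C * C / (A * A')). split; [split|].
  - apply Rdiv_lt_0_compat; nra.
  - apply (Rmult_lt_reg_r (A * A')); [nra|]. field_simplify; nra.
  - assert (C * C / (A * A') * (A / A' * (A' * A')) = C * C) by (field; lra).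
    f_equal; [field; lra | nra].
Qed.

Lemma transferred_noncollinear : noncollinear V0 Q' V1'.
Proof.
  coordinates. unfold noncollinear, det2, psub; simpl.
  match goal with |- ?e <> 0 => replace e with (- (A * A * C * C * B * B)) end.
  - assert (0 < A * A * C * C * B * B) by (repeat apply Rmult_lt_0_compat; lra).
    lra.
  - field; lra.
Qed.

Lemma transferred_edge_lengths :
  has_affine_length (psub Q' V0) (lam * IZR (c*c)) /\
  has_affine_length (psub V1' Q') (lam * IZR (b*b)) /\
  has_affine_length (psub V0 V1') (lam * IZR (a'*a')).
Proof.
  assert (Hlam := transfer_scale_pos).
  split; [|split].
  - exists (b*b)%Z, (- m1)%Z. split; [exact Hprim_u1|]. split.
    + apply Rmult_le_pos; [lra | apply IZR_le; nia].
    + coordinates. f_equal; field; lra.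
  - exists (- (c*c))%Z, (- K)%Z. split; [exact Hprim_K|]. split.
    + apply Rmult_le_pos; [lra | apply IZR_le; nia].
    + coordinates. f_equal; field_simplify; nra.
  - exists 0%Z, 1%Z. split; [exact primitive_0_1|]. split.
    + apply Rmult_le_pos; [lra | apply IZR_le; nia].
    + coordinates. f_equal; field_simplify; nra.
Qed.

Lemma transfer_cut_triangle (Q : pt) (M : pt -> pt) :
  (exists t, Q = padd V2 (pscale t w1)) -> segment V0 V1 Q ->
  (forall p q, psub (M p) (M q) = padd (psub p q) (pscale (det2 w1 (psub p q)) w1)) ->
  (forall t, M (padd V2 (pscale t w1)) = padd V2 (pscale t w1)) ->
  exists P0 P1 P2 lam, 0 < lam /\ noncollinear P0 P1 P2 /\
    (forall x, (conv3 V0 Q V2 x \/ exists y, conv3 Q V1 V2 y /\ x = M y) <-> conv3 P0 P1 P2 x) /\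
    has_affine_length (psub P1 P0) (lam * IZR (c*c)) /\
    has_affine_length (psub P2 P1) (lam * IZR (b*b)) /\
    has_affine_length (psub P0 P2) (lam * IZR (a'*a')).
Proof.
  intros HQl HQs HM HMfix.
  assert (HMV2 : M V2 = V2).
  { specialize (HMfix 0). replace (padd V2 (pscale 0 w1)) with V2 in HMfix; [exact HMfix|].
    unfold padd, pscale; simpl. f_equal; ring. }
  assert (HMQ : M Q = Q) by (destruct HQl as [t ->]; apply HMfix).
  assert (HQ := cut_meets_edge Q HQl HQs).
  assert (HMV1 := shear_image_vertex M HM HMV2).
  destruct cut_vertex_on_edge as (be & Hbe & HV2).
  exists V0, Q, (M V1), lam. rewrite HMV1.
  split; [exact transfer_scale_pos|]. split; [rewrite HQ; exact transferred_noncollinear|]. split.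
  - intros x. rewrite (image_conv3 w1 M HM), HMQ, HMV2, HMV1.
    apply (conv3_split _ _ _ _ be Hbe HV2).
  - rewrite HQ. exact transferred_edge_lengths.
Qed.
End CutTransfer.

Theorem proposition2p4 (a b c m1 m2 : Z) (V0 Q : pt) (M : pt -> pt) :
  markov_triple a b c ->
  (0 < m1)%Z -> (0 < m2)%Z -> (a*a*m1 + b*b*m2 = c*c)%Z ->
  let l2 := ((m2 + 1) / a)%Z in
  let u1 := zpt (b*b) (- m1) in
  let u2 := zpt (- (a*a)) (- m2) in
  let w1 := zpt (- a) (- l2) in
  let V1 := padd V0 (pscale (IZR (a*a)) u1) in
  let V2 := padd V1 (pscale (IZR (b*b)) u2) in
  (* Q is the point where the line l = V2 + R w1 meets the edge [V0,V1] *)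
  (exists t : R, Q = padd V2 (pscale t w1)) ->
  segment V0 V1 Q ->
  (* M is the affine map fixing l pointwise with linear part v |-> v + det(w1,v) w1 *)
  (forall p q : pt, psub (M p) (M q) =
      padd (psub p q) (pscale (det2 w1 (psub p q)) w1)) ->
  (forall t : R, M (padd V2 (pscale t w1)) = padd V2 (pscale t w1)) ->
  let Delta' := fun x : pt =>
    conv3 V0 Q V2 x \/ exists y, conv3 Q V1 V2 y /\ x = M y in
  let a' := (3*b*c - a)%Z in
  exists (P0 P1 P2 : pt) (lam : R),
    0 < lam /\ noncollinear P0 P1 P2 /\
    (forall x, Delta' x <-> conv3 P0 P1 P2 x) /\
    has_affine_length (psub P1 P0) (lam * IZR (c*c)) /\
    has_affine_length (psub P2 P1) (lam * IZR (b*b)) /\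
    has_affine_length (psub P0 P2) (lam * IZR (a'*a')).
Proof.
  intros Hmk _ _ Hmm l2 u1 u2 w1 V1 V2 HQl HQs HMlin HMfix Delta' a'.
  pose proof Hmk as (Ha & Hb & Hc & Emk).
  assert (Hl2 : (a * l2 = m2 + 1)%Z).
  { symmetry. apply Zdivide_Zdiv_eq; [exact Ha | exact (markov_weight_divides a b c m1 m2 Hmk Hmm)]. }
  assert (Haa' : (a * a' = b*b + c*c)%Z) by (unfold a'; nia).
  destruct (markov_cofactor a b c m1 m2 Hmk Hmm) as (K & HK & HprimK).
  exact (transfer_cut_triangle a b c m1 m2 l2 a' K V0 Ha Hb Hc Hmm Hl2 Haa' HK
    (markov_weight_primitive a b c m1 m2 Hmk Hmm) HprimK Q M HQl HQs HMlin HMfix).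
Qed.
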